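(* For every integer $n\ge1$, \[ \sum_{k=1}^{n}2^{k-1}\omega(n-k)=\sum_{\substack{m+k=n\\ m\ge1,\ k\ge0}}c_\psi(m)\,\Omega_m(k). \]
   Context: A composition of $n$ is an ordered sequence $(a_1,\dots,a_r)$ of positive integers with $a_1+\dots+a_r=n$; it is relatively prime if $\gcd(a_1,\dots,a_r)=1$. $c_\psi(n)$ is the number of relatively prime compositions of $n$. $\omega:\mathbb{Z}\to\mathbb{Z}$ is defined by $\omega(0)=1$; $\omega(m)=(-1)^j$ if $m=\frac{3j^2\pm j}{2}$ for some integer $j\ge1$; $\omega(m)=0$ otherwise (in particular for $m<0$). For $m\ge1$ and integer $k$, $\Omega_m(k)=\sum_{j\ge0}\omega(k-jm)=\omega(k)+\omega(k-m)+\omega(k-2m)+\cdots$. *)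

From mathcomp Require Import all_boot all_order all_algebra.
Set Implicit Arguments. Unset Strict Implicit. Unset Printing Implicit Defensive.
Import Order.TTheory GRing.Theory Num.Theory.
Local Open Scope ring_scope.

Fixpoint comps_aux (fuel n : nat) : seq (seq nat) :=
  match fuel with
  | O => [:: [::]]
  | S f => if n == 0%N then [:: [::]]
           else flatten [seq [seq a :: s | s <- comps_aux f (n - a)]
                        | a <- iota 1 n]
  end.
Definition comps (n : nat) : seq (seq nat) := comps_aux n n.

Definition is_composition (n : nat) (s : seq nat) : bool :=
  all (fun a => 0 < a)%N s && (sumn s == n).

Definition gcd_seq (s : seq nat) : nat := foldr gcdn 0%N s.

Definition c_psi (n : nat) : nat :=
  count (fun s => gcd_seq s == 1%N) (comps n).

(* omega(0)=1; omega(m)=(-1)^j if m = (3j^2 +- j)/2 for some j>=1; 0 otherwise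
   (in particular omega(m)=0 for m<0). Such j satisfies j <= m. *)
Definition pent_index (M : nat) (j : nat) : bool :=
  (0 < j)%N && ((2 * M == 3 * j * j + j)%N || (2 * M == 3 * j * j - j)%N).

Definition omega (m : int) : int :=
  if m == 0 then 1
  else if m < 0 then 0
  else match [pick j : 'I_(`|m|%N.+1) | pent_index `|m|%N j] with
       | Some j => (-1) ^+ (nat_of_ord j)
       | None => 0
       end.

(* Omega_m(k) = sum_{j>=0} omega(k - j m); terms vanish once k - j m < 0,
   so for m >= 1 and k >= 0 the sum over 0 <= j <= k is the full sum. *)
Definition Omega (m : nat) (k : int) : int :=
  \sum_(0 <= j < `|k|%N.+1) omega (k - (j * m)%:Z).

From mathcomp Require Import all_boot all_order all_algebra zify.
Import Order.TTheory GRing.Theory Num.Theory.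

Set Implicit Arguments.
Unset Strict Implicit.
Unset Printing Implicit Defensive.

(* The gcd [g] of a composition of [k] divides [k], and dividing all parts by
   [g] matches the compositions of [k] with gcd [g] with the relatively prime
   compositions of [k / g]; hence [2 ^ (k - 1) = \sum_(d %| k) c_psi d].
   Substituting this into the left-hand side and exchanging the sums, the
   coefficient of [c_psi m] is the sum of [omega (n - k)] over the multiples [k]
   of [m], which is [Omega m (n - m)] because [omega] vanishes on negative
   arguments.  Nothing else about [omega] is used. *)

Lemma comps_aux_fuel f g m : (m <= f)%N -> (m <= g)%N ->
  comps_aux f m = comps_aux g m.
Proof.
elim: f g m => [|f IH] [|g] m hf hg /=.
- by [].
- by move: hf; rewrite leqn0 => ->.
- by move: hg; rewrite leqn0 => ->.
case: eqP => // m_neq0; congr flatten; apply/eq_in_map => a.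
by rewrite mem_iota => /andP [a_gt0 a_le]; rewrite (IH g) //; lia.
Qed.

Lemma compsS m : (0 < m)%N ->
  comps m = [seq a :: s | a <- iota 1 m, s <- comps (m - a)].
Proof.
case: m => // m _; apply: (congr1 flatten); apply/eq_in_map => a.
rewrite mem_iota => /andP [a_gt0 a_le].
by rewrite -/comps_aux (@comps_aux_fuel m (m.+1 - a)) //; lia.
Qed.

Lemma size_comps m : (0 < m)%N -> size (comps m) = 2 ^ m.-1.
Proof.
case: m => // m _; elim: m => [|m IH] //.
have size_compsS k :
    size (comps k.+1) = sumn [seq size (comps (k.+1 - a)) | a <- iota 1 k.+1].
  by rewrite compsS // size_allpairs_dep; congr sumn; apply: eq_map => a; rewrite size_map.
(* Splitting off the first part [a = 1], the remaining terms form the expansion of [comps m.+1]. *)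
rewrite size_compsS -add1n iotaD map_cat sumn_cat iotaDl -map_comp.
rewrite [X in X + _]/= subn1 addn0 add1n !succnK expnS mul2n -addnn -IH; congr addn.
by rewrite size_compsS; apply/congr1/eq_map => a /=; rewrite add1n subSS.
Qed.

Lemma mem_comps m s : (s \in comps m) = is_composition m s.
Proof.
rewrite /is_composition; elim/ltn_ind: m s => m IH s.
have [->|m_gt0] := posnP m.
  by case: s => [|[|a] t] //=; rewrite andbF.
rewrite compsS //; apply/allpairsPdep/idP => [[a [t [a_in t_in ->]]]|].
  move: a_in t_in; rewrite mem_iota => /andP [a_gt0 a_le].
  rewrite IH; last by lia.
  by move=> /andP [t_pos /eqP t_sum] /=; rewrite t_pos a_gt0 /=; apply/eqP; lia.
case: s => [|a t] /=; first by rewrite eq_sym gtn_eqF.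
move=> /andP [/andP [a_gt0 t_pos] /eqP s_sum]; exists a, t; split => //.
  by rewrite mem_iota; apply/andP; split; lia.
by rewrite IH; [rewrite t_pos /=; apply/eqP|]; lia.
Qed.

Lemma comps_uniq m : uniq (comps m).
Proof.
elim/ltn_ind: m => m IH; have [->|m_gt0] := posnP m; first by [].
rewrite compsS //; apply: allpairs_uniq_dep.
- exact: iota_uniq.
- by move=> a; rewrite mem_iota => /andP [a_gt0 _]; apply: IH; lia.
- by move=> [a s] [b t] _ _ /= [-> ->].
Qed.

Lemma dvdn_gcd_seq s a : a \in s -> gcd_seq s %| a.
Proof.
elim: s => // b s IH; rewrite inE /= => /predU1P [->|a_in]; first exact: dvdn_gcdl.
exact: dvdn_trans (dvdn_gcdr _ _) (IH a_in).
Qed.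

Lemma dvdn_gcd_seq_sumn s : gcd_seq s %| sumn s.
Proof. by elim: s => //= b s IH; rewrite dvdn_add ?dvdn_gcdl ?(dvdn_trans (dvdn_gcdr _ _)). Qed.

Lemma gcd_seq_scale g s : gcd_seq (map (muln g) s) = g * gcd_seq s.
Proof. by elim: s => [|b s IH] /=; rewrite ?muln0 // IH muln_gcdr. Qed.

Lemma sumn_scale g s : sumn (map (muln g) s) = g * sumn s.
Proof. by elim: s => [|b s IH] /=; rewrite ?muln0 // IH mulnDr. Qed.

Lemma dvdn_gcd_seq_comps k s : s \in comps k -> gcd_seq s %| k.
Proof. by rewrite mem_comps => /andP [_ /eqP <-]; apply: dvdn_gcd_seq_sumn. Qed.

Lemma gcd_seq_comps_gt0 k s : (0 < k)%N -> s \in comps k -> (0 < gcd_seq s)%N.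
Proof.
move=> k_gt0 /dvdn_gcd_seq_comps; rewrite lt0n; apply: contraTneq => ->.
by rewrite dvd0n -lt0n.
Qed.

Lemma mem_comps_gcd g q s : (0 < g)%N ->
  (s \in [seq t <- comps (g * q) | gcd_seq t == g]) =
  (s \in map (map (muln g)) [seq t <- comps q | gcd_seq t == 1%N]).
Proof.
move=> g_gt0; rewrite mem_filter mem_comps /is_composition; apply/idP/mapP.
  move=> /and3P [/eqP gcd_s s_pos /eqP sum_s].
  have g_dvd a : a \in s -> g %| a by rewrite -gcd_s; apply: dvdn_gcd_seq.
  have s_scale : s = map (muln g) (map (divn^~ g) s).
    rewrite -map_comp -[LHS]map_id; apply/eq_in_map => a a_in /=.
    by rewrite mulnC divnK ?g_dvd.
  exists (map (divn^~ g) s) => //; rewrite mem_filter mem_comps; apply/and3P; split.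
  - by rewrite -(eqn_pmul2l g_gt0) -gcd_seq_scale -s_scale gcd_s muln1.
  - apply/allP => _ /mapP [a a_in ->]; rewrite divn_gt0 //.
    by apply: dvdn_leq; [exact: (allP s_pos) | exact: g_dvd].
  - by rewrite -(eqn_pmul2l g_gt0) -sumn_scale -s_scale sum_s.
move=> [t]; rewrite mem_filter mem_comps => /and3P [/eqP gcd_t t_pos /eqP sum_t] ->.
rewrite gcd_seq_scale gcd_t muln1 sumn_scale sum_t !eqxx andbT /=.
by apply/allP => _ /mapP [a /(allP t_pos) a_gt0 ->]; rewrite muln_gt0 g_gt0.
Qed.

Lemma count_comps_gcd g q : (0 < g)%N ->
  count (fun s => gcd_seq s == g) (comps (g * q)) = c_psi q.
Proof.
move=> g_gt0; rewrite /c_psi -!size_filter -[RHS](size_map (map (muln g))).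
apply/perm_size/uniq_perm; first exact: filter_uniq (comps_uniq _).
  rewrite map_inj_uniq ?filter_uniq ?comps_uniq //.
  by apply: inj_map => a b /eqP; rewrite eqn_pmul2l // => /eqP.
by move=> s; apply: mem_comps_gcd.
Qed.

Lemma count_comps_cofactor k d : (0 < k)%N -> (0 < d)%N ->
  count (fun s => d == k %/ gcd_seq s) (comps k) = (d %| k) * c_psi d.
Proof.
move=> k_gt0 d_gt0.
have cofactorE s : s \in comps k -> (d == k %/ gcd_seq s) = (gcd_seq s * d == k).
  move=> s_in; have gcd_gt0 := gcd_seq_comps_gt0 k_gt0 s_in.
  by rewrite eqn_div ?dvdn_gcd_seq_comps // [d * _]mulnC.
rewrite (eq_in_count cofactorE); have [d_dvd|d_ndvd] := boolP (d %| k).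
  have k_div_gt0 : (0 < k %/ d)%N by rewrite divn_gt0 // dvdn_leq.
  rewrite mul1n -(count_comps_gcd d k_div_gt0) divnK //.
  by apply: eq_count => s; rewrite eqn_div.
rewrite mul0n (eq_count (a2 := pred0)) ?count_pred0 // => s /=.
by apply: contraNF d_ndvd => /eqP <-; apply: dvdn_mull.
Qed.

(* Each of the [2 ^ (k - 1)] compositions of [k] is counted once, under its
   cofactor [d = k / gcd]. *)
Lemma pow2_divisor_sum n k : (1 <= k <= n)%N ->
  2 ^ (k - 1) = \sum_(1 <= d < n.+1) (d %| k) * c_psi d.
Proof.
move=> /andP [k_gt0 k_le_n]; rewrite subn1 -size_comps // -sum1_size.
transitivity (\sum_(s <- comps k) \sum_(1 <= d < n.+1 | d == k %/ gcd_seq s) 1).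
  apply: eq_big_seq => s s_in; have gcd_gt0 := gcd_seq_comps_gt0 k_gt0 s_in.
  rewrite big_nat1_eq ltnS (leq_trans (leq_div _ _) k_le_n) andbT.
  by rewrite divn_gt0 // dvdn_leq // dvdn_gcd_seq_comps.
rewrite (exchange_big_dep predT) //=; apply: eq_big_nat => d /andP [d_gt0 _].
by rewrite sum1_count count_comps_cofactor.
Qed.

Local Open Scope ring_scope.

Lemma sum_multiples_shift (R : pzSemiRingType) (f : int -> R) n m : (0 < m)%N ->
  (forall x, x < 0 -> f x = 0) ->
  \sum_(1 <= j < n.+1) f (n%:Z - (j * m)%N%:Z) =
  \sum_(1 <= k < n.+1) (if (m %| k)%N then f (n%:Z - k%:Z) else 0).
Proof.
move=> m_gt0 f_neg.
transitivity (\sum_(1 <= j < n.+1) \sum_(1 <= k < n.+1 | k == (j * m)%N) f (n%:Z - k%:Z)).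
  apply: eq_big_nat => j /andP [j_gt0 _]; rewrite big_nat1_eq muln_gt0 j_gt0 m_gt0 /=.
  by case: ltnP => // n_lt; rewrite f_neg // subr_lt0 ltz_nat.
rewrite (exchange_big_dep predT) //=; apply: eq_big_nat => k /andP [k_gt0 k_le_n].
rewrite (eq_bigl (fun j => (m %| k)%N && (j == k %/ m)%N)) => [|j]; last first.
  case: (boolP (m %| k)%N) => [m_dvd|m_ndvd] /=; first by rewrite eqn_div // eq_sym.
  by apply: contraNF m_ndvd => /eqP ->; apply: dvdn_mull.
rewrite big_nat1_cond_eq; case: (boolP (m %| k)%N) => m_dvd; rewrite ?andbF //.
by rewrite divn_gt0 // dvdn_leq //= ltnS (leq_trans (leq_div _ _)).
Qed.

Lemma pow2_conv_c_psi (R : pzSemiRingType) (f : int -> R) n :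
  (forall x, x < 0 -> f x = 0) ->
  \sum_(1 <= k < n.+1) (2 ^ (k - 1))%:R * f (n%:Z - k%:Z) =
  \sum_(1 <= m < n.+1) (c_psi m)%:R * \sum_(1 <= j < n.+1) f (n%:Z - (j * m)%N%:Z).
Proof.
move=> f_neg.
under eq_big_nat => k k_range do rewrite (pow2_divisor_sum k_range) natr_sum mulr_suml.
rewrite exchange_big_nat; apply: eq_big_nat => m /andP [m_gt0 _].
rewrite sum_multiples_shift // mulr_sumr; apply: eq_bigr => k _.
by rewrite natrM; case: (m %| k)%N; rewrite ?mul1r ?mul0r ?mulr0.
Qed.

Lemma omega_neg x : x < 0 -> omega x = 0.
Proof. by move=> x_lt0; rewrite /omega (negbTE (ltr0_neq0 x_lt0)) x_lt0. Qed.

Lemma Omega_shift n m : (1 <= m <= n)%N ->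
  Omega m (n%:Z - m%:Z) = \sum_(1 <= j < n.+1) omega (n%:Z - (j * m)%N%:Z).
Proof.
move=> /andP [m_gt0 m_le_n]; rewrite /Omega subzn // absz_nat.
rewrite [RHS](big_cat_nat _ (n := (n - m).+2)) //=; last by lia.
have tail0 : \sum_((n - m).+2 <= j < n.+1) omega (n%:Z - (j * m)%N%:Z) = 0.
  rewrite big_nat_cond big1 // => j /andP [/andP [j_ge _] _].
  have n_lt : (n < j * m)%N by nia.
  by apply: omega_neg; lia.
rewrite tail0 addr0 big_add1 /=; apply: eq_bigr => j _.
by rewrite mulSn; congr omega; lia.
Qed.

Theorem mainTheorem10 (n : nat) (hn : (1 <= n)%N) :
  \sum_(1 <= k < n.+1) (2 ^ (k - 1))%:Z * omega (n%:Z - k%:Z)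
  = \sum_(1 <= m < n.+1) (c_psi m)%:Z * Omega m (n%:Z - m%:Z).
Proof.
rewrite (eq_bigr (fun k => (2 ^ (k - 1))%:R * omega (n%:Z - k%:Z))) => [|k _].
  rewrite pow2_conv_c_psi; last exact: omega_neg.
  by apply: eq_big_nat => m m_range; rewrite natz Omega_shift.
by rewrite natz.
Qed.
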